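(* In a $\$$-bounded contract, for all $\mathcal{A}\subseteq\mathbb{A}$, all mempools $\mathcal{P}\subseteq\mathbb{X}$ and all (reachable) states $s$, $\mathrm{MEV}_{\mathcal{A}}(s,\mathcal{P})$ is defined and non-negative.
   Context: Fix a countably infinite set $\mathbb{A}$ of actors, a set $\mathbb{T}$ of token types and a set $\mathbb{X}$ of transactions. A wallet is a function $\mathbb{T}\to\mathbb{N}$; $\mathbb{W}_{\mathrm{fin}}$ is the set of finite-support wallets. A wallet state is $W:\mathbb{A}\to(\mathbb{T}\to\mathbb{N})$ satisfying the finite tokens axiom $\sum_{\tau}\sum_{a\in\mathbb{A}}W(a)(\tau)\in\mathbb{N}$. A contract consists of blockchain states $\mathbb{S}=\mathbb{C}\times\mathbb{W}$ (contract state, wallet state), a partial transition function $\mapsto:(\mathbb{S}\times\mathbb{X})\rightharpoonup\mathbb{S}$ and initial states $\mathbb{S}_0$. A transaction $x$ is valid in $s$ if $s\xmapsto{x}s'$ for some $s'$. For finite sequences, $s\xrightarrow{\varepsilon}s$, and $s\xrightarrow{\vec{Y}x}s'$ iff either $s\xrightarrow{\vec{Y}}s''\xmapsto{x}s'$, or $s\xrightarrow{\vec{Y}}s'$ and $x$ is not valid in $s'$. $s$ is reachable if $s_0\xrightarrow{\vec X}s$ for some $s_0\in\mathbb{S}_0$ and some $\vec X$. $W_{\mathcal{A}}(s)=\sum_{a\in\mathcal{A}}W(s)(a)$. A wealth function is an additive map $\$:\mathbb{W}_{\mathrm{fin}}\to\mathbb{N}$; $\$_{\mathcal{A}}(s)=\$(W_{\mathcal{A}}(s))$;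 the gain is $G_{\mathcal{A}}(s,\vec{X})=\$_{\mathcal{A}}(s')-\$_{\mathcal{A}}(s)$ where $s\xrightarrow{\vec X}s'$. The contract is $\$$-bounded if for every $s_0\in\mathbb{S}_0$ there is $n$ such that $\$_{\mathbb{A}}(s)<n$ for all $s$ reachable from $s_0$. A transaction deducibility function $\kappa:\mathcal{P}(\mathbb{A})\times\mathcal{P}(\mathbb{X})\to\mathcal{P}(\mathbb{X})$, $(\mathcal{A},\mathcal{X})\mapsto\kappa_{\mathcal{A}}(\mathcal{X})$, satisfies: extensivity $\mathcal{X}\subseteq\kappa_{\mathcal{A}}(\mathcal{X})$; idempotence $\kappa_{\mathcal{A}}(\kappa_{\mathcal{A}}(\mathcal{X}))=\kappa_{\mathcal{A}}(\mathcal{X})$; monotonicity in both arguments; continuity $\kappa_{\mathcal{A}}(\bigcup_i\mathcal{X}_i)=\bigcup_i\kappa_{\mathcal{A}}(\mathcal{X}_i)$ for increasing chains; finite causes (every finite $\mathcal{X}_0$ is contained in $\kappa_{\mathcal{A}_0}(\emptyset)$ for some finite $\mathcal{A}_0$); private knowledge ($\kappa_{\mathcal{A}}(\emptyset)\subseteq\kappa_{\mathcal{A}'}(\emptyset)$ implies $\mathcal{A}\subseteq\mathcal{A}'$); no shared secrets ($\kappa_{\mathcal{A}}(\mathcal{X})\cap\kappa_{\mathcal{B}}(\mathcal{X})\subseteq\kappa_{\mathcal{A}\cap\mathcal{B}}(\mathcal{X})$). $\mathcal{X}^*$ denotes the finite sequences over $\mathcal{X}$. The unrealized gain is $\mathrm{uG}_{\mathcal{A}}(s)=\max\{G_{\mathcal{A}}(s,\vec{Y}):\vec{Y}\in\kappa_{\mathcal{A}}(\emptyset)^*\}$;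 the external gain is $\mathrm{xG}_{\mathcal{A}}(s,\vec{Y})=G_{\mathcal{A}}(s,\vec{Y})-\mathrm{uG}_{\mathcal{A}}(s)$. The MEV extracted by $\mathcal{A}$ from a mempool $\mathcal{P}\subseteq\mathbb{X}$ in $s$ is $\mathrm{MEV}_{\mathcal{A}}(s,\mathcal{P})=\max\{\mathrm{xG}_{\mathcal{A}}(s,\vec{Y}):\vec{Y}\in\kappa_{\mathcal{A}}(\mathcal{P})^*\}$. *)

From HB Require Import structures.
From mathcomp Require Import all_boot all_order all_algebra.
From mathcomp Require Import boolp classical_sets functions cardinality fsbigop.

Set Implicit Arguments.
Unset Strict Implicit.
Unset Printing Implicit Defensive.

Import Order.TTheory GRing.Theory Num.Theory.
Local Open Scope classical_set_scope.

Definition wallet (Tok : Type) := Tok -> nat.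

Definition fin_wallet (Tok : Type) (w : wallet Tok) : Prop :=
  finite_set [set t | w t <> 0%N].

(* Wallet states with the finite tokens axiom:
   sum_tau sum_a W a tau is a natural number, i.e. only finitely many
   (actor, token) pairs carry a non-zero balance. *)
Definition finite_tokens (Act Tok : Type) (W : Act -> wallet Tok) : Prop :=
  finite_set [set p : Act * Tok | W p.1 p.2 <> 0%N].

Definition wstate (Act Tok : Type) := {W : Act -> wallet Tok | finite_tokens W}.

Definition bstate (C Act Tok : Type) := (C * wstate Act Tok)%type.

Definition wof (C Act Tok : Type) (s : bstate C Act Tok) : Act -> wallet Tok :=
  proj1_sig s.2.

Definition wealth_fun (Tok : Type) (f : wallet Tok -> nat) : Prop :=
  forall w1 w2 : wallet Tok, fin_wallet w1 -> fin_wallet w2 ->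
    f (fun t => w1 t + w2 t)%N = (f w1 + f w2)%N.

(* W_A(s) = sum_{a in A} W(s)(a)  (finite sum by the finite tokens axiom). *)
Definition W_set (C : Type) (Act : choiceType) (Tok : Type)
  (A : set Act) (s : bstate C Act Tok) : wallet Tok :=
  fun t => (\sum_(a \in A) wof s a t)%R.

Definition wealth_set (C : Type) (Act : choiceType) (Tok : Type)
  (wl : wallet Tok -> nat) (A : set Act) (s : bstate C Act Tok) : nat :=
  wl (W_set A s).

(* Execution of a finite sequence of transactions: s -eps-> s, and
   s -Yx-> s' iff s -Y-> s'' |-> s' via x, or s -Y-> s' and x invalid in s'.
   As |-> is a partial function, this relation is functional; we define it
   as a (left) fold. *)
Definition exec (S X : Type) (step : S -> X -> option S) (s : S) (Y : seq X) : S :=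
  foldl (fun s x => match step s x with Some s' => s' | None => s end) s Y.

Definition reachable_from (S X : Type) (step : S -> X -> option S) (s0 s : S) : Prop :=
  exists Y : seq X, exec step s0 Y = s.

Definition reachable (S X : Type) (step : S -> X -> option S) (init : set S) (s : S) : Prop :=
  exists2 s0, init s0 & reachable_from step s0 s.

Definition wealth_bounded (C : Type) (Act : choiceType) (Tok X : Type)
  (wl : wallet Tok -> nat) (step : bstate C Act Tok -> X -> option (bstate C Act Tok))
  (init : set (bstate C Act Tok)) : Prop :=
  forall s0, init s0 -> exists n : nat,
    forall s, reachable_from step s0 s -> (wealth_set wl [set: Act] s < n)%N.

Definition gain (C : Type) (Act : choiceType) (Tok X : Type)
  (wl : wallet Tok -> nat) (step : bstate C Act Tok -> X -> option (bstate C Act Tok))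
  (A : set Act) (s : bstate C Act Tok) (Y : seq X) : int :=
  ((wealth_set wl A (exec step s Y))%:Z - (wealth_set wl A s)%:Z)%R.

Record deducibility (Act X : Type) (kappa : set Act -> set X -> set X) : Prop := {
  ded_extensive : forall A Xs, Xs `<=` kappa A Xs;
  ded_idempotent : forall A Xs, kappa A (kappa A Xs) = kappa A Xs;
  ded_monotone : forall A A' Xs Xs', A `<=` A' -> Xs `<=` Xs' ->
                   kappa A Xs `<=` kappa A' Xs';
  ded_continuous : forall A (Xi : nat -> set X), (forall i, Xi i `<=` Xi i.+1) ->
      kappa A (\bigcup_(i in [set: nat]) Xi i)
      = \bigcup_(i in [set: nat]) kappa A (Xi i);
  ded_finite_causes : forall X0 : set X, finite_set X0 ->
      exists2 A0 : set Act, finite_set A0 & X0 `<=` kappa A0 set0;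
  ded_private_knowledge : forall A A', kappa A set0 `<=` kappa A' set0 -> A `<=` A';
  ded_no_shared_secrets : forall A B Xs,
      kappa A Xs `&` kappa B Xs `<=` kappa (A `&` B) Xs
}.

Fixpoint seq_in (X : Type) (Xs : set X) (Y : seq X) : Prop :=
  match Y with
  | [::] => True
  | x :: Y' => Xs x /\ seq_in Xs Y'
  end.

Definition is_max (E : set int) (m : int) : Prop :=
  E m /\ forall y, E y -> (y <= m)%R.

Definition uG_is (C : Type) (Act : choiceType) (Tok X : Type)
  (wl : wallet Tok -> nat) (step : bstate C Act Tok -> X -> option (bstate C Act Tok))
  (kappa : set Act -> set X -> set X)
  (A : set Act) (s : bstate C Act Tok) (u : int) : Prop :=
  is_max [set g | exists2 Y, seq_in (kappa A set0) Y & g = gain wl step A s Y] u.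

Definition MEV_is (C : Type) (Act : choiceType) (Tok X : Type)
  (wl : wallet Tok -> nat) (step : bstate C Act Tok -> X -> option (bstate C Act Tok))
  (kappa : set Act -> set X -> set X)
  (A : set Act) (s : bstate C Act Tok) (P : set X) (m : int) : Prop :=
  exists u : int, uG_is wl step kappa A s u /\
    is_max [set g | exists2 Y, seq_in (kappa A P) Y &
                                g = (gain wl step A s Y - u)%R] m.

From HB Require Import structures.
From mathcomp Require Import all_boot all_order all_algebra.
From mathcomp Require Import boolp classical_sets functions cardinality fsbigop.
From mathcomp Require Import zify.

Set Implicit Arguments.
Unset Strict Implicit.
Unset Printing Implicit Defensive.

Import Order.TTheory GRing.Theory Num.Theory.
Local Open Scope classical_set_scope.

(* From a reachable state every future state is reachable from the same
   initial state, so boundedness caps the total wealth, hence the wealth of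
   [A], hence every gain of [A].  A nonempty set of integers bounded above has
   a maximum, so uG and MEV are defined.  MEV is non-negative because a
   sequence over [kappa A set0] realising uG is also a sequence over
   [kappa A P] (monotonicity), with external gain 0. *)

Lemma is_max_exists (E : set int) (b : int) :
  (exists e, E e) -> (forall y, E y -> (y <= b)%R) -> exists m, is_max E m.
Proof.
move=> [e Ee] ubE.
suff climb (k : nat) e' : E e' -> (b - e' <= Posz k)%R -> exists m, is_max E m.
  by apply: (climb `|b - e|%N e Ee); rewrite abszE ler_norm.
elim: k e' => [|k IHk] e' Ee' le_gap.
  by exists e'; split=> // y Ey; have := ubE y Ey; lia.
have [[y [Ey lt_e'y]]|no_larger] := pselect (exists y, E y /\ (e' < y)%R).
  by apply: (IHk y Ey); lia.
exists e'; split=> // y Ey; rewrite leNgt; apply/negP=> lt_e'y.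
by apply: no_larger; exists y.
Qed.

Lemma seq_in_sub (X : Type) (Xs Xs' : set X) (Y : seq X) :
  Xs `<=` Xs' -> seq_in Xs Y -> seq_in Xs' Y.
Proof. by move=> sub; elim: Y => //= x Y IHY [Xsx XsY]; split; [apply: sub|apply: IHY]. Qed.

Lemma exec_cat (S X : Type) (step : S -> X -> option S) (s : S) (Y1 Y2 : seq X) :
  exec step s (Y1 ++ Y2) = exec step (exec step s Y1) Y2.
Proof. exact: foldl_cat. Qed.

Lemma reachable_from_exec (S X : Type) (step : S -> X -> option S) (s0 s : S) (Y : seq X) :
  reachable_from step s0 s -> reachable_from step s0 (exec step s Y).
Proof. by move=> [Y0 <-]; exists (Y0 ++ Y); rewrite exec_cat. Qed.

Section Wealth.
Variables (C : Type) (Act : choiceType) (Tok : Type) (wl : wallet Tok -> nat).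
Hypothesis additive_wl : wealth_fun wl.
Implicit Types (B : set Act) (s : bstate C Act Tok).

Lemma W_set_neq0 B s t : W_set B s t <> 0%N -> exists a, wof s a t <> 0%N.
Proof.
move=> W_neq0; apply: contra_notP W_neq0 => all0.
rewrite /W_set fsbig1 // => a _; by apply: contra_notP all0 => wof_neq0; exists a.
Qed.

Lemma fin_wallet_W_set B s : fin_wallet (W_set B s).
Proof.
apply: (sub_finite_set _ (finite_image snd (proj2_sig s.2))).
by move=> t /= /W_set_neq0 [a wof_neq0]; exists (a, t).
Qed.

Lemma W_setT_split B s t : W_set [set: Act] s t = (W_set B s t + W_set (~` B) s t)%N.
Proof.
rewrite /W_set (__deprecated__full_fsbigID B) ?setTI //.
apply: (sub_finite_set _ (finite_image fst (proj2_sig s.2))).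
by move=> a /= wof_neq0; exists (a, t).
Qed.

Lemma wealth_set_le_setT B s : (wealth_set wl B s <= wealth_set wl [set: Act] s)%N.
Proof.
rewrite /wealth_set.
have -> : W_set [set: Act] s = (fun t => W_set B s t + W_set (~` B) s t)%N.
  by apply: funext => t; apply: W_setT_split.
by rewrite additive_wl ?leq_addr //; apply: fin_wallet_W_set.
Qed.

Lemma gain_bounded (X : Type) (step : bstate C Act Tok -> X -> option (bstate C Act Tok))
    (init : set (bstate C Act Tok)) B s :
  wealth_bounded wl step init -> reachable step init s ->
  exists n : nat, forall Y, (gain wl step B s Y <= Posz n)%R.
Proof.
move=> bounded [s0 init_s0 reach_s].
have [n total_lt_n] := bounded s0 init_s0.
exists n => Y; rewrite /gain lerBlDr.
have le_B := wealth_set_le_setT B (exec step s Y).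
have lt_n : (wealth_set wl [set: Act] (exec step s Y) < n)%N.
  exact/total_lt_n/reachable_from_exec.
by rewrite -PoszD lez_nat; lia.
Qed.

End Wealth.

Lemma MEV_exists_ge0 (Act : choiceType) (Tok X C : Type)
    (kappa : set Act -> set X -> set X) (wl : wallet Tok -> nat)
    (step : bstate C Act Tok -> X -> option (bstate C Act Tok))
    (A : set Act) (P : set X) (s : bstate C Act Tok) (b : int) :
  kappa A set0 `<=` kappa A P -> (forall Y, (gain wl step A s Y <= b)%R) ->
  exists m : int, MEV_is wl step kappa A s P m /\ (0 <= m)%R.
Proof.
move=> sub_kappa gain_le_b.
have [u [[Yu kappa0_Yu ->] u_max]] :
    exists u, uG_is wl step kappa A s u.
  apply: (is_max_exists (b := b)); first by exists 0%R, [::] => //; rewrite /gain subrr.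
  by move=> _ [Y _ ->].
have kappaP_Yu : seq_in (kappa A P) Yu by apply: seq_in_sub kappa0_Yu.
have [m [xG_m m_max]] : exists m, is_max [set g | exists2 Y, seq_in (kappa A P) Y &
    g = (gain wl step A s Y - gain wl step A s Yu)%R] m.
  apply: (is_max_exists (b := (b - gain wl step A s Yu)%R)).
    by exists 0%R, Yu; rewrite ?subrr.
  by move=> _ [Y _ ->]; rewrite lerD2r.
exists m; split; last by apply: m_max; exists Yu; rewrite ?subrr.
by exists (gain wl step A s Yu); do !split=> //; exists Yu.
Qed.

Theorem mainTheorem9
  (Act : countType) (Tok X C : Type)
  (Act_infinite : infinite_set [set: Act])
  (kappa : set Act -> set X -> set X) (Hkappa : deducibility kappa)
  (wl : wallet Tok -> nat) (Hwl : wealth_fun wl)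
  (step : bstate C Act Tok -> X -> option (bstate C Act Tok))
  (init : set (bstate C Act Tok))
  (Hbounded : wealth_bounded wl step init)
  (A : set Act) (P : set X) (s : bstate C Act Tok)
  (Hreach : reachable step init s) :
  exists m : int, MEV_is wl step kappa A s P m /\ (0 <= m)%R.
Proof.
have [n gain_le_n] := gain_bounded Hwl A Hbounded Hreach.
apply: (MEV_exists_ge0 (b := Posz n)) gain_le_n.
exact: (ded_monotone Hkappa).
Qed.
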